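(* Let $n>1$ and $m$ be positive integers, and let $\mathbf{u}\in\mathbb{R}^n$ be a fixed vector. Let $\mathbf{R}\in\mathbb{R}^{m\times n}$ be a random matrix such that either (i) its rows $\mathbf{R}_i$ are i.i.d. samples from an isotropic distribution $P$ on $\mathbb{R}^n$, or (ii) $\hat{\mathbf{R}}$ is a randomly generated matrix with orthogonal rows (uniformly over all rotations). Let $\mathbf{v}=\mathrm{ReLU}\left(\sqrt{2n/m}\cdot\hat{\mathbf{R}}\mathbf{u}\right)$. Then $\mathbb{E}[\lVert\mathbf{v}\rVert^2]=K_n\cdot\lVert\mathbf{u}\rVert^2$, where \[ K_n=\begin{cases}\frac{2S_{n-1}}{S_n}\cdot\left(\frac{2}{3}\cdot\frac{4}{5}\cdots\frac{n-2}{n-1}\right) & \text{if } n \text{ is even},\\[4pt] \frac{2S_{n-1}}{S_n}\cdot\left(\frac{1}{2}\cdot\frac{3}{4}\cdots\frac{n-2}{n-1}\right)\cdot\frac{\pi}{2} & \text{otherwise},\end{cases} \] and $S_n$ denotes the surface area of a unit $n$-dimensional sphere (empty products are equal to $1$).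
   Context: For a matrix $\mathbf{R}$ with nonzero rows $\mathbf{R}_i$, $\hat{\mathbf{R}}$ denotes the matrix whose $i$-th row is $\hat{\mathbf{R}}_i=\mathbf{R}_i/\lVert\mathbf{R}_i\rVert_2$ (each row normalized to unit Euclidean norm). A distribution $P$ on $\mathbb{R}^n$ is isotropic if it is invariant under all orthogonal transformations of $\mathbb{R}^n$ (all directions equally likely), with no mass at the origin. In case (ii), ''randomly generated with orthogonal rows'' means $\hat{\mathbf{R}}$ has orthonormal rows (so $m\le n$) and its distribution is uniform over all rotations (Haar-distributed). $\mathrm{ReLU}$ is applied coordinatewise, $\mathrm{ReLU}(x)=\max(0,x)$. *)

From HB Require Import structures.
From mathcomp Require Import all_boot all_order all_algebra.
From mathcomp Require Import all_classical all_reals all_analysis.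
Set Implicit Arguments. Unset Strict Implicit. Unset Printing Implicit Defensive.
Import Order.TTheory GRing.Theory Num.Theory.
Import numFieldNormedType.Exports.
Local Open Scope classical_set_scope.
Local Open Scope ring_scope.

Section Defs.
Variable R : realType.

Definition borelM (p q : nat) : set (set 'M[R]_(p, q)) :=
  <<s [set A | open A] >>.

Definition enorm (n : nat) (x : 'rV[R]_n) : R :=
  Num.sqrt (\sum_(j < n) x ord0 j ^+ 2).

Definition cnorm (n : nat) (x : 'cV[R]_n) : R :=
  Num.sqrt (\sum_(j < n) x j ord0 ^+ 2).

Definition rownormalize (m n : nat) (A : 'M[R]_(m, n)) : 'M[R]_(m, n) :=
  \matrix_(i < m, j < n) (A i j / enorm (row i A)).

Definition ReLU_cV (m : nat) (x : 'cV[R]_m) : 'cV[R]_m :=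
  \col_(i < m) Num.max 0 (x i ord0).

Definition orthogonal (n : nat) (Q : 'M[R]_n) : Prop := Q *m Q^T = 1%:M.

Definition orthonormal_rows (m n : nat) (A : 'M[R]_(m, n)) : Prop :=
  A *m A^T = 1%:M.

(* Surface area S_k of the unit k-dimensional sphere S^k (subset of R^(k+1)),
   via the standard recursion S_0 = 2, S_1 = 2 pi, S_(k+2) = 2 pi S_k / (k+1),
   i.e. S_k = 2 pi^((k+1)/2) / Gamma((k+1)/2). *)
Fixpoint sphere_area (k : nat) : R :=
  match k with
  | 0 => 2
  | 1 => 2 * pi
  | (k'.+2) as _ => 2 * pi * sphere_area k' / (k'.+1)%:R
  end.

Definition Kconst (n : nat) : R :=
  if ~~ odd n then
    2 * sphere_area n.-1 / sphere_area n *
    \prod_(1 <= j < n./2) ((2 * j)%:R / (2 * j + 1)%:R)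
  else
    2 * sphere_area n.-1 / sphere_area n *
    \prod_(1 <= j < (n./2).+1) ((2 * j - 1)%:R / (2 * j)%:R) * (pi / 2).

Section Prob.
Context (d : measure_display) (T : measurableType d) (P : probability T R).

Definition rmeasurable (p q : nat) (X : T -> 'M[R]_(p, q)) : Prop :=
  forall B, borelM B -> measurable (X @^-1` B).

Definition same_law (p q : nat) (X Y : T -> 'M[R]_(p, q)) : Prop :=
  forall B, borelM B -> P (X @^-1` B) = P (Y @^-1` B).

Definition independent_rows (m n : nat) (X : 'I_m -> T -> 'rV[R]_n) : Prop :=
  forall (I : {set 'I_m}) (B : 'I_m -> set 'rV[R]_n),
    (forall i, borelM (B i)) ->
    P (\bigcap_(i in [set` I]) (X i @^-1` B i)) =
    (\prod_(i in I) P (X i @^-1` B i))%E.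

Definition isotropic_law (n : nat) (X : T -> 'rV[R]_n) : Prop :=
  (forall Q : 'M[R]_n, orthogonal Q -> same_law X (fun w => X w *m Q)) /\
  P (X @^-1` [set 0]) = 0%E.

Definition iid_isotropic_rows (m n : nat) (A : T -> 'M[R]_(m, n)) : Prop :=
  (forall i, rmeasurable (fun w => row i (A w))) /\
  independent_rows (fun i w => row i (A w)) /\
  (exists X0 : T -> 'rV[R]_n, rmeasurable X0 /\ isotropic_law X0 /\
     forall i, same_law (fun w => row i (A w)) X0).

(* Case (ii): hat(A) has orthonormal rows and is uniformly (Haar)
   distributed over rotations: its law is invariant under every orthogonal
   transformation of R^n. *)
Definition haar_orthogonal_rows (m n : nat) (A : T -> 'M[R]_(m, n)) : Prop :=
  (m <= n)%N /\
  rmeasurable A /\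
  (forall w i, row i (A w) != 0) /\
  (forall w, orthonormal_rows (rownormalize (A w))) /\
  (forall Q : 'M[R]_n, orthogonal Q ->
     same_law (fun w => rownormalize (A w))
              (fun w => rownormalize (A w) *m Q)).

End Prob.
End Defs.

(* Write R_i for the normalised rows.  Each R_i has a rotation-invariant law on the
   unit sphere, so E <R_i, c>^2 depends on c only through |c|: a Householder
   reflection maps c to |c| e_0.  Summing over c = e_0, ..., e_(n-1) gives
   E |R_i|^2 = 1, hence E <R_i, c>^2 = |c|^2 / n.  The reflection c |-> -c exchanges
   the positive and negative parts of <R_i, u>, so E ReLU(<R_i, u>)^2 = |u|^2 / (2n),
   and summing over the m rows gives E |v|^2 = |u|^2.  Finally K_n = 1, by the
   recursion S_(k+2) = 2 pi S_k / (k+1) of the sphere areas. *)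

From Pilot Require Import Defs.
From HB Require Import structures.
From mathcomp Require Import all_boot all_order all_algebra.
From mathcomp Require Import all_classical all_reals all_analysis.
From mathcomp Require Import ring lra zify measurable_realfun.
Import Order.TTheory GRing.Theory Num.Theory.
Import numFieldNormedType.Exports.
Local Open Scope classical_set_scope.
Local Open Scope ring_scope.
Set Implicit Arguments. Unset Strict Implicit. Unset Printing Implicit Defensive.

Section Norms.
Variable R : realType.

Lemma enormE n (x : 'rV[R]_n) : enorm x = Num.sqrt ((x *m x^T) 0 0).
Proof.
rewrite /enorm mxE; congr Num.sqrt; apply: eq_bigr => j _.
by rewrite mxE expr2.
Qed.

Lemma enorm_mulmx_orthogonal n (x : 'rV[R]_n) Q :
  Defs.orthogonal Q -> enorm (x *m Q) = enorm x.
Proof. by move=> oQ; rewrite !enormE trmx_mul !mulmxA -(mulmxA x) oQ mulmx1. Qed.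

Lemma enormZ n (x : 'rV[R]_n) a : enorm (a *: x) = `|a| * enorm x.
Proof.
rewrite /enorm -sqrtr_sqr -sqrtrM ?sqr_ge0 // mulr_sumr.
by congr Num.sqrt; apply: eq_bigr => j _; rewrite mxE exprMn.
Qed.

Lemma enorm_eq0 n (x : 'rV[R]_n) : (enorm x == 0) = (x == 0).
Proof.
have sq_ge0 j : 0 <= x ord0 j ^+ 2 := sqr_ge0 _.
rewrite /enorm sqrtr_eq0 le_eqVlt ltNge sumr_ge0 // orbF psumr_eq0 //=.
apply/allP/eqP => [x0|-> j _]; last by rewrite mxE expr0n.
by apply/rowP => j; rewrite mxE; apply/eqP; rewrite -sqrf_eq0 x0 ?mem_index_enum.
Qed.

Lemma row_rownormalize p n (B : 'M[R]_(p, n)) r :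
  row r (rownormalize B) = (enorm (row r B))^-1 *: row r B.
Proof. by apply/rowP => j; rewrite !mxE mulrC. Qed.

Lemma row_rownormalize_mulmx p n (B : 'M[R]_(p, n)) r Q : Defs.orthogonal Q ->
  row r (rownormalize (B *m Q)) = row r (rownormalize B) *m Q.
Proof.
by move=> oQ; rewrite !row_rownormalize row_mul enorm_mulmx_orthogonal // scalemxAl.
Qed.

Lemma rownormalize_id p n (B : 'M[R]_(p, n)) :
  rownormalize (rownormalize B) = rownormalize B.
Proof.
apply/row_matrixP => r; rewrite !row_rownormalize enormZ.
have [->|nz] := eqVneq (row r B) 0; first by rewrite !scaler0.
have e0 : enorm (row r B) != 0 by rewrite enorm_eq0.
by rewrite ger0_norm ?invr_ge0 ?sqrtr_ge0 // mulVf // invr1 scale1r.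
Qed.

Lemma cnorm_sqr k (x : 'cV[R]_k) : cnorm x ^+ 2 = \sum_j x j 0 ^+ 2.
Proof. by rewrite sqr_sqrtr // sumr_ge0 // => j _; apply: sqr_ge0. Qed.

Lemma trmx_mul_cV k (x y : 'cV[R]_k) : x^T *m y = (\sum_j x j 0 * y j 0)%:M.
Proof.
rewrite [LHS]mx11_scalar; congr (_%:M); rewrite mxE.
by apply: eq_bigr => j _; rewrite mxE.
Qed.

Lemma trmx_mul_cVxx k (x : 'cV[R]_k) : x^T *m x = (cnorm x ^+ 2)%:M.
Proof. by rewrite trmx_mul_cV cnorm_sqr; congr (_%:M); apply: eq_bigr => j _; rewrite expr2. Qed.

Lemma cnorm_eq0 k (x : 'cV[R]_k) : (cnorm x == 0) = (x == 0).
Proof.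
rewrite -sqrf_eq0 cnorm_sqr psumr_eq0 /=; last by move=> j _; apply: sqr_ge0.
apply/allP/eqP => [x0|-> j _]; last by rewrite mxE expr0n.
by apply/colP => j; rewrite mxE; apply/eqP; rewrite -sqrf_eq0 x0 ?mem_index_enum.
Qed.

Lemma cnormZ k (x : 'cV[R]_k) a : cnorm (a *: x) = `|a| * cnorm x.
Proof.
rewrite /cnorm -sqrtr_sqr -sqrtrM ?sqr_ge0 // mulr_sumr.
by congr Num.sqrt; apply: eq_bigr => j _; rewrite mxE exprMn.
Qed.

Lemma cnorm_delta k (i : 'I_k) : cnorm (delta_mx i 0 : 'cV[R]_k) = 1.
Proof.
rewrite /cnorm (bigD1 i) //= big1 => [|j ji]; last by rewrite mxE (negbTE ji) expr0n.
by rewrite mxE !eqxx expr1n addr0 sqrtr1.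
Qed.

(* The Householder reflection [1 - 2 w w^T / |w|^2] with [w = x - y]; it sends x to y
   because [|w|^2 = 2 <w, x>] when [|x| = |y|]. *)
Lemma exists_orthogonal_map k (x y : 'cV[R]_k) :
  cnorm x = cnorm y -> exists2 Q, Defs.orthogonal Q & Q *m x = y.
Proof.
move=> nxy; have [<-|neqxy] := eqVneq x y.
  by exists 1%:M; rewrite ?mul1mx // /Defs.orthogonal trmx1 mulmx1.
set w := x - y; set s := cnorm w ^+ 2; set t := (w^T *m x) 0 0.
have wx : w^T *m x = t%:M := mx11_scalar _.
have wwE : w^T *m w = s%:M := trmx_mul_cVxx w.
have s_2t : s = 2 * t.
  have xy : \sum_j (y j 0 ^+ 2 - x j 0 ^+ 2) = 0 by rewrite sumrB -!cnorm_sqr nxy subrr.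
  have E (a b : R) : (a - b) ^+ 2 - (b ^+ 2 - a ^+ 2) = 2 * ((a - b) * a) by ring.
  rewrite -(subr0 s) -xy /s /t cnorm_sqr trmx_mul_cV mxE eqxx mulr1n mulr_sumr -sumrB.
  by apply: eq_bigr => j _; rewrite !mxE; apply: E.
have s0 : s != 0 by rewrite sqrf_eq0 cnorm_eq0 subr_eq0.
have wE : x - y = w by [].
clearbody w.
exists (1%:M - (2 / s) *: (w *m w^T)).
  have wwT : (w *m w^T)^T = w *m w^T by rewrite trmx_mul trmxK.
  rewrite /Defs.orthogonal [(_ - _)^T]linearB /= [(_ *: _)^T]linearZ /= trmx1 wwT.
  rewrite mulmxBl mul1mx mulmxBr mulmx1 -!scalemxAl -!scalemxAr mulmxA -(mulmxA w) wwE.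
  rewrite mul_mx_scalar -scalemxAl !scalerA.
  have -> : 2 / s * (2 / s * s) = 2 / s + 2 / s by field.
  by rewrite scalerDl opprB addrK subrK.
rewrite mulmxBl mul1mx -scalemxAl -mulmxA wx mul_mx_scalar scalerA.
have t0 : t != 0 by apply: contraNneq s0; rewrite s_2t => ->; rewrite mulr0.
have -> : 2 / s * t = 1 by rewrite s_2t; field.
by rewrite scale1r -wE opprB addrC subrK.
Qed.

End Norms.

Section SphereConstant.
Variable R : realType.
Local Notation S := (sphere_area R).

Lemma sphere_area_gt0 k : 0 < S k.
Proof.
suff : 0 < S k /\ 0 < S k.+1 by case.
elim: k => [|k [Sk SSk]]; first by rewrite /= mulr_gt0 ?pi_gt0.
by split => //=; rewrite divr_gt0 ?mulr_gt0 ?pi_gt0.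
Qed.

Lemma sphere_areaSS k : S k.+2 = 2 * pi * S k / k.+1%:R.
Proof. by []. Qed.

Lemma sphere_area_ratio k :
  2 * S k.+2 / S k.+3 * (k.+1%:R / k.+2%:R) = 2 * S k / S k.+1.
Proof.
have Sk := sphere_area_gt0 k; have SSk := sphere_area_gt0 k.+1.
have pi0 := pi_gt0 R; have k0 : 0 <= k%:R :> R := ler0n _ _.
rewrite !sphere_areaSS; move: (pi : R) (S k) (S k.+1) pi0 Sk SSk => q a b q0 a0 b0.
by field; rewrite !gt_eqF //; lra.
Qed.

Lemma Kconst_odd t : Kconst R t.*2.+1 = 1.
Proof.
have KE s : Kconst R s.*2.+1 = 2 * S s.*2 / S s.*2.+1 *
    \prod_(1 <= j < s.+1) ((2 * j - 1)%:R / (2 * j)%:R) * (pi / 2).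
  by rewrite /Kconst /= odd_double /= uphalf_double.
elim: t => [|t IHt]; rewrite KE.
  have pi0 : pi != 0 :> R by rewrite gt_eqF ?pi_gt0.
  by rewrite big_geq //= mulr1; move: (pi : R) pi0 => q q0; field.
rewrite KE in IHt; rewrite -[in RHS]IHt big_nat_recr // doubleS.
have -> : (2 * t.+1 - 1 = t.*2.+1)%N by rewrite -mul2n; lia.
have -> : (2 * t.+1 = t.*2.+2)%N by rewrite -mul2n; lia.
by rewrite [X in _ * X * _]/= -[in RHS](sphere_area_ratio t.*2); ring.
Qed.

Lemma Kconst_even t : Kconst R t.*2.+2 = 1.
Proof.
have KE s : Kconst R s.*2.+2 = 2 * S s.*2.+1 / S s.*2.+2 *
    \prod_(1 <= j < s.+1) ((2 * j)%:R / (2 * j + 1)%:R).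
  by rewrite /Kconst /= odd_double /= doubleK.
elim: t => [|t IHt]; rewrite KE.
  have pi0 : pi != 0 :> R by rewrite gt_eqF ?pi_gt0.
  by rewrite big_geq //= mulr1 mulr1n divr1; move: (pi : R) pi0 => q q0; field.
rewrite KE in IHt; rewrite -[in RHS]IHt big_nat_recr // doubleS.
have -> : (2 * t.+1 + 1 = t.*2.+3)%N by rewrite -mul2n; lia.
have -> : (2 * t.+1 = t.*2.+2)%N by rewrite -mul2n; lia.
by rewrite [X in _ * X]/= -[in RHS](sphere_area_ratio t.*2.+1); ring.
Qed.

Lemma Kconst_eq1 n : (0 < n)%N -> Kconst R n = 1.
Proof.
rewrite -[n]odd_double_half; case: (odd n); first by rewrite Kconst_odd.
by case: n./2 => // t _; rewrite doubleS Kconst_even.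
Qed.

End SphereConstant.

Section BorelFunctions.
Variable R : realType.

Definition borel_fun p q (F : 'M[R]_(p, q) -> R) :=
  @measurable_fun _ _ (g_sigma_algebraType [set A : set 'M[R]_(p, q) | open A])
    R setT F.

Lemma borel_fun_coord p q i j : borel_fun (fun M : 'M[R]_(p, q) => M i j).
Proof.
apply: measurability; first exact: RGenOInfty.measurableE.
move=> _ [_ [x ->] <-]; rewrite setTI; apply: sub_sigma_algebra.
by apply: (continuousP _).1 (@coord_continuous R p q i j) _ (rray_open x).
Qed.

Lemma borelM_preimage p q (F : 'M[R]_(p, q) -> R) B :
  borel_fun F -> measurable B -> borelM (F @^-1` B).
Proof. by move=> mF mB; have := mF measurableT B mB; rewrite setTI. Qed.

Lemma borel_fun_comp p q (F : 'M[R]_(p, q) -> R) (phi : R -> R) :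
  measurable_fun setT phi -> borel_fun F -> borel_fun (phi \o F).
Proof. exact: measurableT_comp. Qed.

Definition unit_row_dot p n (r : 'I_p) (c : 'cV[R]_n) (B : 'M[R]_(p, n)) : R :=
  (row r (rownormalize B) *m c) 0 0.

Lemma unit_row_dotE p n (r : 'I_p) (c : 'cV[R]_n) B :
  unit_row_dot r c B = (\sum_j B r j * c j 0) * (\sum_j B r j ^+ 2) `^ (- 2^-1).
Proof.
rewrite /unit_row_dot row_rownormalize -scalemxAl mxE mulrC; congr (_ * _).
  by rewrite mxE; apply: eq_bigr => j _; rewrite mxE.
rewrite powRN powR12_sqrt ?sumr_ge0 // => [|j _]; last exact: sqr_ge0.
by rewrite /enorm; congr (Num.sqrt _)^-1; apply: eq_bigr => j _; rewrite mxE.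
Qed.

Lemma borel_fun_unit_row_dot p n (r : 'I_p) (c : 'cV[R]_n) :
  borel_fun (unit_row_dot r c).
Proof.
rewrite /borel_fun (funext (unit_row_dotE r c)).
apply: measurable_funM.
  apply: measurable_sum => j; apply: measurable_funM; first exact: borel_fun_coord.
  exact: measurable_cst.
apply: measurableT_comp (measurable_powR _) _.
by apply: measurable_sum => j; apply: measurable_funX; exact: borel_fun_coord.
Qed.

Lemma unit_row_dot_row p n (i : 'I_p) (c : 'cV[R]_n) (B : 'M[R]_(p, n)) :
  unit_row_dot i c B = unit_row_dot 0 c (row i B).
Proof. by rewrite /unit_row_dot !row_rownormalize row_id. Qed.

Lemma unit_row_dot_rownormalize p n (i : 'I_p) (c : 'cV[R]_n) B :
  unit_row_dot i c (rownormalize B) = unit_row_dot i c B.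
Proof. by rewrite /unit_row_dot rownormalize_id. Qed.

Lemma unit_row_dot_mulmx p n (r : 'I_p) (c : 'cV[R]_n) B Q : Defs.orthogonal Q ->
  unit_row_dot r c (B *m Q) = unit_row_dot r (Q *m c) B.
Proof. by move=> oQ; rewrite /unit_row_dot row_rownormalize_mulmx // mulmxA. Qed.

Lemma unit_row_dotZ p n (r : 'I_p) a (c : 'cV[R]_n) B :
  unit_row_dot r (a *: c) B = a * unit_row_dot r c B.
Proof. by rewrite /unit_row_dot -scalemxAr mxE. Qed.

Lemma unit_row_dotN p n (r : 'I_p) (c : 'cV[R]_n) B :
  unit_row_dot r (- c) B = - unit_row_dot r c B.
Proof. by rewrite /unit_row_dot mulmxN mxE. Qed.

Lemma sum_unit_row_dot_sqr p n (r : 'I_p) (B : 'M[R]_(p, n)) :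
  \sum_j unit_row_dot r (delta_mx j 0) B ^+ 2 = (row r B != 0)%:R.
Proof.
have sqr_enorm : enorm (row r B) ^+ 2 = \sum_j B r j ^+ 2.
  rewrite sqr_sqrtr ?sumr_ge0 // => [|j _]; last exact: sqr_ge0.
  by apply: eq_bigr => j _; rewrite mxE.
rewrite (eq_bigr (fun j => (enorm (row r B))^-1 ^+ 2 * B r j ^+ 2)); last first.
  by move=> j _; rewrite /unit_row_dot -colE row_rownormalize !mxE exprMn.
rewrite -mulr_sumr -sqr_enorm -exprMn.
have [->|nz] := eqVneq (row r B) 0.
  by rewrite (eqP (_ : enorm 0 == 0)) ?enorm_eq0 // invr0 mul0r expr0n.
by rewrite mulVf ?expr1n // enorm_eq0.
Qed.

End BorelFunctions.

Definition relu2 {R : realType} (x : R) := Num.max 0 x ^+ 2.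

Lemma measurable_relu2 (R : realType) : measurable_fun setT (@relu2 R).
Proof. by apply: measurable_funX; apply: measurable_maxr => //; exact: measurable_cst. Qed.

Lemma relu2_ge0 (R : realType) (x : R) : 0 <= relu2 x.
Proof. exact: sqr_ge0. Qed.

Lemma relu2D_relu2N (R : realType) (x : R) : relu2 x + relu2 (- x) = x ^+ 2.
Proof.
rewrite /relu2; case: (leP 0 x) => x0; case: (leP 0 (- x)) => nx0;
  rewrite ?expr0n ?addr0 ?add0r ?sqrrN //.
- have -> : x = 0 by lra.
  by rewrite expr0n addr0.
- by exfalso; lra.
Qed.

Lemma orthogonalN1 (R : realType) n : Defs.orthogonal (- 1%:M : 'M[R]_n).
Proof. by rewrite /Defs.orthogonal mulNmx mul1mx linearN /= trmx1 opprK. Qed.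

Section LawTransfer.
Context (R : realType) (d : measure_display) (T : measurableType d)
  (P : probability T R).

Lemma measurable_fun_rmeasurable p q (X : T -> 'M[R]_(p, q)) F :
  rmeasurable X -> borel_fun F -> measurable_fun setT (F \o X).
Proof.
move=> mX mF _ B mB; rewrite setTI comp_preimage; apply: mX.
exact: borelM_preimage.
Qed.

Lemma ge0_integral_eq_of_law (f g : T -> R) :
  measurable_fun setT f -> measurable_fun setT g ->
  (forall x, 0 <= f x) -> (forall x, 0 <= g x) ->
  (forall B, measurable B -> P (f @^-1` B) = P (g @^-1` B)) ->
  (\int[P]_x (f x)%:E = \int[P]_x (g x)%:E)%E.
Proof.
move=> mf mg f0 g0 law.
(* [h] is [EFin] on the nonnegative values of f and g, and nonnegative everywhere. *)
pose h (y : R) : \bar R := (Num.max y 0)%:E.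
have mh : measurable_fun setT h.
  by apply/measurable_EFinP; apply: measurable_maxr => //; exact: measurable_cst.
have h0 : {in setT, forall y, (0 <= h y)%E}.
  by move=> y _; rewrite lee_fin le_max lexx orbT.
have pushE (k : T -> R) : measurable_fun setT k -> (forall x, 0 <= k x) ->
    (\int[P]_x (k x)%:E = \int[pushforward P k]_(y in setT) h y)%E.
  move=> mk k0; rewrite ge0_integral_pushforward // preimage_setT.
  by apply: eq_integral => x _; rewrite /h /= max_l.
rewrite pushE // pushE //; apply: eq_measure_integral => A mA _.
exact: law.
Qed.

Lemma integral_same_law p q (X Y : T -> 'M[R]_(p, q)) (F : 'M[R]_(p, q) -> R) :
  rmeasurable X -> rmeasurable Y -> borel_fun F -> (forall M, 0 <= F M) ->
  same_law P X Y -> (\int[P]_w (F (X w))%:E = \int[P]_w (F (Y w))%:E)%E.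
Proof.
move=> mX mY mF F0 XY; apply: ge0_integral_eq_of_law => //.
- exact: measurable_fun_rmeasurable mX mF.
- exact: measurable_fun_rmeasurable mY mF.
- by move=> B mB; exact: XY (borelM_preimage mF mB).
Qed.

End LawTransfer.

Lemma enatmulS_EFin (R : realType) (x : \bar R) (y : R) k :
  (x *+ k.+1)%E = y%:E -> x = (y / k.+1%:R)%:E.
Proof.
case: x => [x||]; rewrite ?enatmul_pinfty ?enatmul_ninfty // -EFin_natmul => -[<-].
by rewrite -[x *+ _]mulr_natr mulfK ?pnatr_eq0.
Qed.

Section IsotropicRow.
Context (R : realType) (d : measure_display) (T : measurableType d)
  (P : probability T R).
Variables (p n : nat) (W : T -> 'M[R]_(p, n.+1)) (r : 'I_p).
Hypotheses (mW : forall c, measurable_fun setT (fun w => unit_row_dot r c (W w)))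
  (W_invariant : forall Q, Defs.orthogonal Q -> same_law P W (fun w => W w *m Q))
  (row_eq0_null : P [set w | row r (W w) = 0] = 0%E).

Definition moment (phi : R -> R) (c : 'cV[R]_n.+1) : \bar R :=
  (\int[P]_w (phi (unit_row_dot r c (W w)))%:E)%E.

Let measurable_phi_dot (phi : R -> R) c : measurable_fun setT phi ->
  measurable_fun setT (fun w => phi (unit_row_dot r c (W w))).
Proof. by move=> mphi; apply: measurableT_comp mphi (mW c). Qed.

Local Notation sq := (fun x : R => x ^+ 2).

Let measurable_sqr : measurable_fun setT sq.
Proof. exact: exprn_measurable. Qed.

Lemma moment_mulmx (phi : R -> R) c Q : measurable_fun setT phi -> (forall x, 0 <= phi x) ->
  Defs.orthogonal Q -> moment phi c = moment phi (Q *m c).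
Proof.
move=> mphi phi0 oQ.
apply: ge0_integral_eq_of_law => [||x|x|B mB]; try exact: measurable_phi_dot;
  try exact: phi0.
have borelB := borelM_preimage (borel_fun_comp mphi (borel_fun_unit_row_dot r c)) mB.
rewrite [LHS](_ : _ = P (W @^-1` ((phi \o unit_row_dot r c) @^-1` B))) //.
rewrite (W_invariant oQ borelB); congr (P _).
by apply/seteqP; split => w /=; rewrite unit_row_dot_mulmx.
Qed.

Lemma moment_sqrZ a c :
  moment sq (a *: c) = ((a ^+ 2)%:E * moment sq c)%E.
Proof.
rewrite /moment; under eq_integral => w _ do rewrite unit_row_dotZ exprMn EFinM.
rewrite ge0_integralZl_EFin ?sqr_ge0 // => [w _|]; first by rewrite lee_fin sqr_ge0.
by apply/measurable_EFinP; exact: measurable_phi_dot _ _ measurable_sqr.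
Qed.

Lemma moment_sqr_cnorm c : moment sq c =
  ((cnorm c ^+ 2)%:E * moment sq (delta_mx ord0 ord0))%E.
Proof.
have [Q oQ Qc] : exists2 Q, Defs.orthogonal Q & Q *m c = cnorm c *: delta_mx ord0 ord0.
  by apply: exists_orthogonal_map; rewrite cnormZ cnorm_delta mulr1 ger0_norm ?sqrtr_ge0.
rewrite (moment_mulmx _ measurable_sqr _ oQ) ?Qc ?moment_sqrZ // => x.
exact: sqr_ge0.
Qed.

Lemma measurable_row_eq0 : measurable [set w | row r (W w) = 0].
Proof.
have -> : [set w | row r (W w) = 0] =
    (fun w => \sum_j unit_row_dot r (delta_mx j ord0) (W w) ^+ 2) @^-1` [set 0].
  apply/seteqP; split => w /=; rewrite sum_unit_row_dot_sqr; first by move=> ->; rewrite eqxx.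
  by case: eqP => // _ /eqP; rewrite oner_eq0.
rewrite -[X in measurable X]setTI; apply: measurable_sum => // j.
exact: measurable_phi_dot _ _ measurable_sqr.
Qed.

Lemma sum_moment_sqr_delta :
  (\sum_(j < n.+1) moment sq (delta_mx j ord0) = 1)%E.
Proof.
rewrite /moment -ge0_integral_sum // => [|j|j w _]; last 2 first.
- by apply/measurable_EFinP; exact: measurable_phi_dot _ _ measurable_sqr.
- by rewrite lee_fin sqr_ge0.
set Z := [set w | row r (W w) = 0].
rewrite (eq_integral (fun w => (\1_(~` Z) w)%:E)) => [|w _]; last first.
  rewrite sumEFin sum_unit_row_dot_sqr indicE in_setC; congr (_%:R)%:E.
  by congr (~~ _); apply/idP/idP; rewrite inE /Z /= => /eqP.
rewrite integral_indic //; last exact/measurableC/measurable_row_eq0.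
by rewrite setIT; have := probability_setC P measurable_row_eq0; rewrite row_eq0_null sube0.
Qed.

Lemma moment_sqr_delta0 :
  moment sq (delta_mx ord0 ord0) = (n.+1%:R^-1)%:E.
Proof.
rewrite -[_^-1]mul1r; apply: enatmulS_EFin; rewrite -[RHS]sum_moment_sqr_delta.
rewrite (eq_bigr (fun=> moment sq (delta_mx ord0 ord0))) ?sumr_const ?card_ord // => j _.
by rewrite moment_sqr_cnorm cnorm_delta expr1n mul1e.
Qed.

Lemma moment_relu2_double c :
  (moment relu2 c *+ 2 = moment sq c)%E.
Proof.
rewrite mule2n {2}(moment_mulmx _ (@measurable_relu2 R) (@relu2_ge0 R) (orthogonalN1 _ _)).
rewrite mulNmx mul1mx /moment -ge0_integralD // => [|w _|| w _|].
- by apply: eq_integral => w _; rewrite -EFinD unit_row_dotN relu2D_relu2N.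
- by rewrite lee_fin relu2_ge0.
- by apply/measurable_EFinP; exact: measurable_phi_dot _ _ (@measurable_relu2 R).
- by rewrite lee_fin relu2_ge0.
- by apply/measurable_EFinP; exact: measurable_phi_dot _ _ (@measurable_relu2 R).
Qed.

Lemma integral_relu2_unit_row_dot c :
  (\int[P]_w (relu2 (unit_row_dot r c (W w)))%:E = (cnorm c ^+ 2 / (2 * n.+1%:R))%:E)%E.
Proof.
rewrite invfM mulrA mulrAC; apply: enatmulS_EFin.
by rewrite -/(moment relu2 c) moment_relu2_double moment_sqr_cnorm moment_sqr_delta0.
Qed.

End IsotropicRow.

Section RandomRows.
Context (R : realType) (d : measure_display) (T : measurableType d)
  (P : probability T R).
Variables (p n : nat) (A : T -> 'M[R]_(p, n.+1)).

Lemma measurable_unit_row_dot i c :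
  iid_isotropic_rows P A \/ haar_orthogonal_rows P A ->
  measurable_fun setT (fun w => unit_row_dot i c (A w)).
Proof.
case=> [[mrow _]|[_ [mA _]]].
  rewrite (funext (fun w => unit_row_dot_row i c (A w))).
  exact: measurable_fun_rmeasurable (mrow i) (borel_fun_unit_row_dot _ _).
exact: measurable_fun_rmeasurable mA (borel_fun_unit_row_dot _ _).
Qed.

Lemma integral_relu2_iid_isotropic i c : iid_isotropic_rows P A ->
  (\int[P]_w (relu2 (unit_row_dot i c (A w)))%:E = (cnorm c ^+ 2 / (2 * n.+1%:R))%:E)%E.
Proof.
(* Only the common isotropic law of the rows matters, not their independence. *)
case=> mrow [_ [X [mX [[X_invariant X_null0] rowX]]]].
have borel_relu2_dot : borel_fun (@relu2 R \o unit_row_dot (ord0 : 'I_1) c).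
  exact: borel_fun_comp (@measurable_relu2 R) (borel_fun_unit_row_dot _ _).
under eq_integral do rewrite unit_row_dot_row.
rewrite (integral_same_law (mrow i) mX borel_relu2_dot (fun=> relu2_ge0 _) (rowX i)).
apply: (integral_relu2_unit_row_dot _ X_invariant _ c).
- by move=> c'; apply: measurable_fun_rmeasurable mX (borel_fun_unit_row_dot _ _).
- by rewrite -X_null0; congr (P _); apply/seteqP; split => w /=; rewrite row_id.
Qed.

Lemma integral_relu2_haar i c : haar_orthogonal_rows P A ->
  (\int[P]_w (relu2 (unit_row_dot i c (A w)))%:E = (cnorm c ^+ 2 / (2 * n.+1%:R))%:E)%E.
Proof.
case=> _ [mA [A_neq0 [_ A_invariant]]].
under eq_integral do rewrite -unit_row_dot_rownormalize.
apply: (integral_relu2_unit_row_dot _ A_invariant _ c).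
- move=> c'; under eq_fun do rewrite unit_row_dot_rownormalize.
  exact: measurable_fun_rmeasurable mA (borel_fun_unit_row_dot _ _).
- rewrite -(measure0 P); congr (P _); apply/seteqP; split => w //= /eqP.
  rewrite row_rownormalize scaler_eq0 invr_eq0 enorm_eq0 orbb.
  by rewrite (negbTE (A_neq0 w i)).
Qed.

End RandomRows.

Lemma cnorm_ReLU_sqr (R : realType) m n k (u : 'cV[R]_n) (B : 'M[R]_(m, n)) :
  0 <= k -> cnorm (ReLU_cV (Num.sqrt k *: (rownormalize B *m u))) ^+ 2 =
  \sum_(i < m) k * relu2 (unit_row_dot i u B).
Proof.
move=> k0; rewrite cnorm_sqr; apply: eq_bigr => i _.
rewrite /relu2 !mxE -[in RHS](sqr_sqrtr k0) -exprMn maxr_pMr ?sqrtr_ge0 // mulr0.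
by congr ((Num.max 0 (_ * _)) ^+ 2); rewrite /unit_row_dot !mxE; apply: eq_bigr => j _; rewrite !mxE.
Qed.

Theorem theorem1 (R : realType) (d : measure_display) (T : measurableType d)
  (P : probability T R) (n m : nat) (u : 'cV[R]_n)
  (A : T -> 'M[R]_(m, n)) :
  (1 < n)%N -> (0 < m)%N ->
  (iid_isotropic_rows P A \/ haar_orthogonal_rows P A) ->
  let v := fun w => ReLU_cV (Num.sqrt (2 * n%:R / m%:R) *: (rownormalize (A w) *m u)) in
  (\int[P]_w ((cnorm (v w)) ^+ 2)%:E = (Kconst R n * (cnorm u) ^+ 2)%:E)%E.
Proof.
move=> n_gt1 m_gt0 hA v; rewrite Kconst_eq1 ?(ltnW n_gt1) // mul1r {}/v.
case: n n_gt1 u A hA => // n _ u A hA.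
set k : R := 2 * n.+1%:R / m%:R.
have k0 : 0 <= k by rewrite divr_ge0 ?mulr_ge0.
have mrelu i : measurable_fun setT (fun w => relu2 (unit_row_dot i u (A w))).
  exact: measurableT_comp (@measurable_relu2 R) (measurable_unit_row_dot i u hA).
have Erelu i : (\int[P]_w (k * relu2 (unit_row_dot i u (A w)))%:E =
    (k * (cnorm u ^+ 2 / (2 * n.+1%:R)))%:E)%E.
  under eq_integral do rewrite EFinM.
  rewrite ge0_integralZl_EFin // => [|w _|]; last 2 first.
  - by rewrite lee_fin relu2_ge0.
  - exact/measurable_EFinP.
  by case: hA => [/integral_relu2_iid_isotropic|/integral_relu2_haar] ->.
under eq_integral do rewrite cnorm_ReLU_sqr // -sumEFin.
rewrite ge0_integral_sum // => [|i|i w _]; last 2 first.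
- exact/measurable_EFinP/measurable_funM/mrelu/measurable_cst.
- by rewrite lee_fin mulr_ge0 ?relu2_ge0.
rewrite (eq_bigr _ (fun i _ => Erelu i)) sumEFin sumr_const card_ord /k -mulr_natl.
by congr (_%:E); field; rewrite pnatr_eq0 -lt0n m_gt0 andbT gt_eqF.
Qed.
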